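(* Let $\mathcal A$ be a Banach algebra and $(a_\alpha)_{\alpha\in\Lambda}$ a bounded net in $\mathcal A$ which is quasi-central, i.e. $\lim_\alpha(aa_\alpha-a_\alpha a)=0$ for all $a\in\mathcal A$, and let $I(a_\alpha)=\{a\in\mathcal A:\lim_\alpha aa_\alpha=a\}$. If one of the following holds: (i) $\mathcal A$ is weakly amenable and $\{a_\alpha:\alpha\in\Lambda\}\subseteq I(a_\alpha)$; (ii) there exists a closed two-sided ideal $M$ of $\mathcal A$ of codimension one such that $H^1(M,I(a_\alpha)^* )=\{0\}$; then $\mathcal A$ is $I(a_\alpha)$-weakly amenable, i.e. $H^1(\mathcal A,I(a_\alpha)^* )=\{0\}$.
   Context: $I(a_\alpha)$ is a closed two-sided ideal of $\mathcal A$. For a closed two-sided ideal $J$, $J^*$ is a Banach $\mathcal A$-bimodule (and, by restriction, an $M$-bimodule) with $\langle x,a\cdot f\rangle=\langle xa,f\rangle$, $\langle x,f\cdot a\rangle=\langle ax,f\rangle$. For a Banach algebra $\mathcal B$ and Banach $\mathcal B$-bimodule $Z$, a derivation is a continuous linear map $D:\mathcal B\to Z$ with $D(ab)=a\cdot D(b)+D(a)\cdot b$; it is inner if $D(a)=a\cdot z-z\cdot a$ for some $z\in Z$; $H^1(\mathcal B,Z)=\{0\}$ means every derivation is inner. $\mathcal A$ is weakly amenable if $H^1(\mathcal A,\mathcal A^* )=\{0\}$. *)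

From HB Require Import structures.
From mathcomp Require Import all_boot all_order all_algebra.
From mathcomp Require Import all_classical all_reals all_analysis.
From mathcomp Require Import complex.
Set Implicit Arguments. Unset Strict Implicit. Unset Printing Implicit Defensive.
Import Order.TTheory GRing.Theory Num.Theory.
Import numFieldNormedType.Exports.
Local Open Scope classical_set_scope.
Local Open Scope ring_scope.

Section Defs.
Context {K : numFieldType} {A : normedModType K}.

Definition banach_algebra (mul : A -> A -> A) : Prop :=
  [/\ forall a b c, mul a (mul b c) = mul (mul a b) c,
      forall a b c, mul (a + b) c = mul a c + mul b c,
      forall a b c, mul a (b + c) = mul a b + mul a c,
      forall (k : K) a b, mul (k *: a) b = k *: mul a b
                          /\ mul a (k *: b) = k *: mul a b
    & forall a b, `|mul a b| <= `|a| * `|b| ].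

Definition closed_ideal (mul : A -> A -> A) (J : set A) : Prop :=
  [/\ closed J, J 0,
      forall x y, J x -> J y -> J (x + y),
      forall (k : K) x, J x -> J (k *: x)
    & forall a x, J x -> J (mul a x) /\ J (mul x a) ].

Definition codim_one (J : set A) : Prop :=
  exists2 e : A, ~ J e & forall a : A, exists k : K, exists2 m : A, J m & a = k *: e + m.

Definition directed (L : Type) (le : L -> L -> Prop) : Prop :=
  [/\ inhabited L, forall i, le i i,
      forall i j k, le i j -> le j k -> le i k
    & forall i j, exists k, le i k /\ le j k].

Definition net_lim (L : Type) (le : L -> L -> Prop) (x : L -> A) (l : A) : Prop :=
  forall e : K, 0 < e -> exists i0, forall i, le i0 i -> `|x i - l| < e.

Definition bounded_net (L : Type) (x : L -> A) : Prop :=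
  exists M : K, forall i, `|x i| <= M.

Definition quasi_central (mul : A -> A -> A) (L : Type) (le : L -> L -> Prop)
  (x : L -> A) : Prop :=
  forall a, net_lim le (fun i => mul a (x i) - mul (x i) a) 0.

Definition Iset (mul : A -> A -> A) (L : Type) (le : L -> L -> Prop)
  (x : L -> A) : set A :=
  [set a | net_lim le (fun i => mul a (x i)) a].

(** f : A -> K represents an element of the dual J^* : its restriction to J
    is linear and continuous (bounded).  Two such functions represent the
    same functional iff they agree on J. *)
Definition in_dual (J : set A) (f : A -> K) : Prop :=
  [/\ forall x y, J x -> J y -> f (x + y) = f x + f y,
      forall (k : K) x, J x -> f (k *: x) = k * f x
    & exists M : K, forall x, J x -> `|f x| <= M * `|x| ].

(** D : B -> J^* is a (continuous) derivation, where J^* carries the module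
    actions <x, a.f> = <xa, f>, <x, f.a> = <ax, f>. *)
Definition derivation (mul : A -> A -> A) (B J : set A) (D : A -> A -> K) : Prop :=
  [/\ forall a, B a -> in_dual J (D a),
      forall a b x, B a -> B b -> J x -> D (a + b) x = D a x + D b x,
      forall (k : K) a x, B a -> J x -> D (k *: a) x = k * D a x,
      exists M : K, forall a x, B a -> J x -> `|D a x| <= M * `|a| * `|x|
    & forall a b x, B a -> B b -> J x ->
        D (mul a b) x = D b (mul x a) + D a (mul b x) ].

Definition inner_derivation (mul : A -> A -> A) (B J : set A) (D : A -> A -> K) : Prop :=
  exists2 f : A -> K, in_dual J f &
    forall a x, B a -> J x -> D a x = f (mul x a) - f (mul a x).

Definition H1_trivial (mul : A -> A -> A) (B J : set A) : Prop :=
  forall D, derivation mul B J D -> inner_derivation mul B J D.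

Definition weakly_amenable (mul : A -> A -> A) : Prop :=
  H1_trivial mul setT setT.

End Defs.

(* (i) Given a derivation D : A -> I^*, take an ultrafilter U finer than the
   net and set E(a)(y) = lim_U D(a)(y a_i).  Since a_i lies in the left ideal I,
   y a_i is in I for every y in A, and the scalars D(a)(y a_i) are bounded, so
   the limit exists (bounded sets of complex numbers are relatively compact).
   Quasi-centrality lets a_i be moved past a in the Leibniz rule, so E is a
   derivation A -> A^*, and E agrees with D on I because y a_i -> y there.
   Weak amenability makes E, hence D, inner.
   (ii) Write A = K e + M.  The restriction of D to M is implemented by some
   f in I^*, and the defect phi = D(e) - (e.f - f.e) in I^* vanishes on M I and
   on I M.  Writing a_i = k_i e + m_i gives k_i phi(y e) -> phi(y) and
   k_i phi(e y) -> phi(y) for y in I.  If phi(x e) <> 0, then k_i -> k, and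
   e e = c e mod M forces k c = 1; with phi(x e) + phi(e x) = c phi(x) this
   gives phi(e x) = 0, hence phi(x) = k phi(e x) = 0 and phi(x e) = 0, a
   contradiction.  So phi(y e) = 0 for all y, whence phi = 0 on I and f
   implements D on all of A. *)

From HB Require Import structures.
From mathcomp Require Import all_boot all_order all_algebra.
From mathcomp Require Import all_classical all_reals all_analysis.
From mathcomp Require Import complex.
From mathcomp Require Import ring.
Import Order.TTheory GRing.Theory Num.Theory.
Import numFieldNormedType.Exports.
Local Open Scope classical_set_scope.
Local Open Scope ring_scope.

Definition net_filter {L : Type} (le : L -> L -> Prop) : set_system L :=
  filter_from setT (fun i0 => [set i | le i0 i]).

Lemma net_filter_proper {L : Type} {le : L -> L -> Prop} :
  directed le -> ProperFilter (net_filter le).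
Proof.
case=> [[i0] refl trans dir].
apply: filter_from_proper; last by move=> i _; exists i; exact: refl.
apply: filter_from_filter; first by exists i0.
move=> i j _ _; have [k [ik jk]] := dir i j.
by exists k => // l /= kl; split; [exact: trans ik kl|exact: trans jk kl].
Qed.

Lemma net_limE {K : numFieldType} {V : normedModType K} {L : Type}
    {le : L -> L -> Prop} (x : L -> V) (l : V) :
  directed le -> net_lim le x l <-> x @ net_filter le --> l.
Proof.
move=> /net_filter_proper PF; rewrite cvgrPdist_lt; split.
- move=> xl e e0; have [i0 xl0] := xl e e0.
  by exists i0 => // i /= li; rewrite distrC; exact: xl0.
- move=> xl e e0; have [i0 _ xl0] := xl e e0.
  by exists i0 => i li; rewrite distrC; exact: xl0.
Qed.

Lemma bounded_net_ge0 {K : numFieldType} {V : normedModType K} {L : Type} {x : L -> V} :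
  inhabited L -> bounded_net x -> exists2 B : K, 0 <= B & forall i, `|x i| <= B.
Proof. by case=> [i0] [B xB]; exists B => //; exact: le_trans (xB i0). Qed.

Section Limits.
Context {K : numFieldType}.

Lemma cvg_dominated {T : Type} {F : set_system T} {FF : Filter F}
    {V W : normedModType K} {f : T -> V} {h : T -> W} {l : V} {m : W} {C : K} :
  0 <= C -> (forall t, `|h t - m| <= C * `|f t - l|) -> f @ F --> l -> h @ F --> m.
Proof.
move=> C0 hf /cvgrPdist_lt fl; apply/cvgrPdist_lt => e e0.
have C1 : 0 < C + 1 by rewrite ltr_wpDl.
near=> t.
have ft : `|l - f t| < e / (C + 1) by near: t; apply: fl; rewrite divr_gt0.
rewrite distrC (le_lt_trans (hf t)) // (@le_lt_trans _ _ (C * (e / (C + 1)))) //.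
  by rewrite ler_wpM2l // distrC ltW.
by rewrite mulrA ltr_pdivrMr // mulrC ltr_pM2l // ltrDl.
Unshelve. all: by end_near.
Qed.

Lemma cvgr_unique {T : Type} {F : set_system T} {FF : ProperFilter F}
    {h : T -> K} {l l' : K} :
  h @ F --> l -> h @ F --> l' -> l = l'.
Proof. exact: (cvg_unique (@norm_hausdorff _ _)). Qed.

Lemma cvg_norm_ubound {T : Type} {F : set_system T} {FF : ProperFilter F}
    {V : normedModType K} {h : T -> V} {l : V} {C : K} :
  h @ F --> l -> (forall t, `|h t| <= C) -> `|l| <= C.
Proof.
move=> /cvgrPdist_lt hl hC; apply/ler_addgt0Pr => e e0.
have [t /= ht] := filter_ex (hl e e0).
rewrite -(subrK (h t) l) addrC; apply: (le_trans (ler_normD _ _)).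
by rewrite lerD // ltW.
Qed.

(* The constants bounding [in_dual] and [derivation] maps live in [K] and need
   not be real (e.g. for [K = R[i]]); this trades them for nonnegative ones. *)
Lemma ler_Ml_norm (M r s : K) : 0 <= s -> 0 <= r -> s <= M * r -> s <= `|M| * r.
Proof.
move=> s0 r0 sMr; have [r_eq0|r_neq0] := eqVneq r 0.
  by move: sMr; rewrite r_eq0 !mulr0.
have r_gt0 : 0 < r by rewrite lt_def r_neq0.
have M0 : 0 <= M by rewrite -(pmulr_lge0 _ r_gt0) (le_trans s0 sMr).
by rewrite ger0_norm.
Qed.

End Limits.

Section Dual.
Context {K : numFieldType} {A : normedModType K} {J : set A}.

Lemma in_dualS {J' : set A} {f : A -> K} : J' `<=` J -> in_dual J f -> in_dual J' f.
Proof.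
move=> J'J [fD fZ [M fM]]; split.
- by move=> x y /J'J Jx /J'J Jy; exact: fD.
- by move=> k x /J'J Jx; exact: fZ.
- by exists M => x /J'J Jx; exact: fM.
Qed.

Lemma in_dual_bounded {f : A -> K} :
  in_dual J f -> exists2 M : K, 0 <= M & forall x, J x -> `|f x| <= M * `|x|.
Proof. by case=> _ _ [M fM]; exists `|M| => // x Jx; apply: ler_Ml_norm; rewrite ?fM. Qed.

Lemma in_dualB {f g : A -> K} : in_dual J f -> in_dual J g -> in_dual J (f \- g).
Proof.
move=> fd gd; have [fD fZ _] := fd; have [gD gZ _] := gd.
have [Mf _ fM] := in_dual_bounded fd; have [Mg _ gM] := in_dual_bounded gd.
split=> [x y Jx Jy|k x Jx|] /=; first by rewrite fD ?gD //; ring.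
  by rewrite fZ ?gZ //; ring.
exists (Mf + Mg) => x Jx; rewrite mulrDl; apply: le_trans (ler_normB _ _) _.
by rewrite lerD ?fM ?gM.
Qed.

Hypotheses (JD : forall x y, J x -> J y -> J (x + y))
  (JZ : forall (k : K) x, J x -> J (k *: x)).

Lemma in_dual_raddfB {f : A -> K} {x y : A} :
  in_dual J f -> J x -> J y -> f (x - y) = f x - f y.
Proof.
case=> fD fZ _ Jx Jy; have JNy : J (- y) by rewrite -scaleN1r; exact: JZ.
by rewrite fD // -scaleN1r fZ // mulN1r.
Qed.

Lemma in_dual_cvg {T : Type} {F : set_system T} {FF : Filter F} {f : A -> K}
    {z : T -> A} {x : A} :
  in_dual J f -> (forall t, J (z t)) -> J x -> z @ F --> x -> (fun t => f (z t)) @ F --> f x.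
Proof.
move=> fd Jz Jx; have [M M0 fM] := in_dual_bounded fd.
apply: (cvg_dominated M0) => t /=; rewrite -in_dual_raddfB //; apply: fM.
by apply: JD => //; rewrite -scaleN1r; exact: JZ.
Qed.

End Dual.

Lemma derivation_sub {K : numFieldType} {A : normedModType K} {mul : A -> A -> A}
    {B B' J : set A} {D : A -> A -> K} :
  B' `<=` B -> derivation mul B J D -> derivation mul B' J D.
Proof.
move=> B'B [Dd DD DZ [M DM] DL]; split.
- by move=> a /B'B; exact: Dd.
- by move=> a b x /B'B Ba /B'B Bb; exact: DD.
- by move=> k a x /B'B; exact: DZ.
- by exists M => a x /B'B; exact: DM.
- by move=> a b x /B'B Ba /B'B Bb; exact: DL.
Qed.

Section Derivation.
Context {K : numFieldType} {A : normedModType K} {mul : A -> A -> A}.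
Context {J : set A} {D : A -> A -> K}.
Hypothesis dD : derivation mul setT J D.

Lemma derivation_dual a : in_dual J (D a).
Proof. by case: dD => Dd _ _ _ _; exact: Dd. Qed.

Lemma derivationD a b {x} : J x -> D (a + b) x = D a x + D b x.
Proof. by case: dD => _ DD _ _ _; exact: DD. Qed.

Lemma derivationZ (k : K) a {x} : J x -> D (k *: a) x = k * D a x.
Proof. by case: dD => _ _ DZ _ _; exact: DZ. Qed.

Lemma derivation_leibniz a b {x} : J x -> D (mul a b) x = D b (mul x a) + D a (mul b x).
Proof. by case: dD => _ _ _ _ DL; exact: DL. Qed.

Lemma derivation_bounded :
  exists2 M : K, 0 <= M & forall a x, J x -> `|D a x| <= M * `|a| * `|x|.
Proof.
case: dD => _ _ _ [M DM] _; exists `|M| => // a x Jx.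
by rewrite -mulrA; apply: ler_Ml_norm; rewrite ?mulr_ge0 // mulrA; exact: DM.
Qed.

End Derivation.

Definition bounded_ultra_cvg (K : numFieldType) : Prop :=
  forall (T : Type) (U : set_system T), UltraFilter U ->
  forall (h : T -> K) (B : K), (forall t, `|h t| <= B) -> exists l : K, h @ U --> l.

Section BanachAlgebra.
Context {K : numFieldType} {A : normedModType K} {mul : A -> A -> A}.
Hypothesis BA : banach_algebra mul.

Lemma bmulA a b c : mul a (mul b c) = mul (mul a b) c.
Proof. by case: BA. Qed.

Lemma bmulDl a b c : mul (a + b) c = mul a c + mul b c.
Proof. by case: BA. Qed.

Lemma bmulDr a b c : mul a (b + c) = mul a b + mul a c.
Proof. by case: BA. Qed.

Lemma bmulZl (k : K) a b : mul (k *: a) b = k *: mul a b.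
Proof. by case: BA => _ _ _ /(_ k a b) []. Qed.

Lemma bmulZr (k : K) a b : mul a (k *: b) = k *: mul a b.
Proof. by case: BA => _ _ _ /(_ k a b) []. Qed.

Lemma bmul_norm_le a b : `|mul a b| <= `|a| * `|b|.
Proof. by case: BA. Qed.

Lemma bmul0r a : mul a 0 = 0.
Proof. by rewrite -(scale0r 0) bmulZr !scale0r. Qed.

Lemma bmulBl a b c : mul (a - b) c = mul a c - mul b c.
Proof. by rewrite bmulDl -scaleN1r bmulZl scaleN1r. Qed.

Lemma bmulBr a b c : mul a (b - c) = mul a b - mul a c.
Proof. by rewrite bmulDr -scaleN1r bmulZr scaleN1r. Qed.

Lemma cvg_bmull {T : Type} {F : set_system T} {FF : Filter F} {z : T -> A} {l : A} (b : A) :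
  z @ F --> l -> (fun t => mul b (z t)) @ F --> mul b l.
Proof. by apply: (cvg_dominated (normr_ge0 b)) => t; rewrite -bmulBr bmul_norm_le. Qed.

Lemma cvg_bmulr {T : Type} {F : set_system T} {FF : Filter F} {z : T -> A} {l : A} (b : A) :
  z @ F --> l -> (fun t => mul (z t) b) @ F --> mul l b.
Proof. by apply: (cvg_dominated (normr_ge0 b)) => t; rewrite -bmulBl mulrC bmul_norm_le. Qed.

Section QuasiCentralNet.
Context {L : Type} {le : L -> L -> Prop} {aa : L -> A}.
Hypotheses (dle : directed le) (qc : quasi_central mul le aa).

#[local] Instance net_filter_le_proper : ProperFilter (net_filter le) :=
  net_filter_proper dle.

Local Notation F := (net_filter le).
Local Notation I := (Iset mul le aa).

Lemma IsetP x : I x <-> (fun i => mul x (aa i)) @ F --> x.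
Proof. exact: net_limE. Qed.

Lemma quasi_central_cvg a : (fun i => mul a (aa i) - mul (aa i) a) @ F --> 0.
Proof. exact/net_limE/qc. Qed.

Lemma IsetD x y : I x -> I y -> I (x + y).
Proof.
move=> /IsetP xI /IsetP yI; apply/IsetP.
under eq_fun do rewrite bmulDl.
exact: cvgD.
Qed.

Lemma IsetZ (k : K) x : I x -> I (k *: x).
Proof.
move=> /IsetP xI; apply/IsetP.
under eq_fun do rewrite bmulZl.
exact: cvgZ (cvg_cst k) xI.
Qed.

Lemma IsetB {x y} : I x -> I y -> I (x - y).
Proof. by move=> Ix Iy; rewrite -scaleN1r; apply/IsetD/IsetZ. Qed.

Lemma Iset_mull b {x} : I x -> I (mul b x).
Proof.
move=> /IsetP xI; apply/IsetP.
under eq_fun do rewrite -bmulA.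
exact: cvg_bmull.
Qed.

Lemma Iset_mulr b {x} : I x -> I (mul x b).
Proof.
move=> /IsetP xI; apply/IsetP.
have -> : (fun i => mul (mul x b) (aa i)) =
    (fun i => mul x (mul b (aa i) - mul (aa i) b) + mul (mul x (aa i)) b).
  by apply/funext => i; rewrite -!bmulA -bmulDr subrK.
rewrite -[X in _ --> X]add0r -(bmul0r x).
by apply: cvgD; [exact: cvg_bmull (quasi_central_cvg b)|exact: cvg_bmulr].
Qed.

Lemma Iset_cvg_left {x} : I x -> (fun i => mul (aa i) x) @ F --> x.
Proof.
move=> /IsetP xI; rewrite -[x in _ --> x]subr0.
under eq_fun => i do rewrite -[mul (aa i) x](subKr (mul x (aa i))).
exact: cvgB xI (quasi_central_cvg x).
Qed.

Lemma in_dual_mulr {g : A -> K} (b : A) : in_dual I g -> in_dual I (fun x => g (mul x b)).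
Proof.
move=> gd; have [gD gZ _] := gd; have [C C0 gC] := in_dual_bounded gd.
split.
- by move=> x y Ix Iy; rewrite bmulDl gD //; apply: Iset_mulr.
- by move=> k x Ix; rewrite bmulZl gZ //; apply: Iset_mulr.
- exists (C * `|b|) => x Ix; apply: le_trans (gC _ (Iset_mulr b Ix)) _.
  by rewrite mulrAC -mulrA ler_wpM2l // bmul_norm_le.
Qed.

Lemma in_dual_mull {g : A -> K} (b : A) : in_dual I g -> in_dual I (fun x => g (mul b x)).
Proof.
move=> gd; have [gD gZ _] := gd; have [C C0 gC] := in_dual_bounded gd.
split.
- by move=> x y Ix Iy; rewrite bmulDr gD //; apply: Iset_mull.
- by move=> k x Ix; rewrite bmulZr gZ //; apply: Iset_mull.
- exists (C * `|b|) => x Ix; apply: le_trans (gC _ (Iset_mull b Ix)) _.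
  by rewrite -mulrA ler_wpM2l // bmul_norm_le.
Qed.

Section Extension.
Hypotheses (Kcvg : bounded_ultra_cvg K) (bnd : bounded_net aa) (Iaa : forall i, I (aa i)).
Context {D : A -> A -> K} {U : set_system L} {UU : UltraFilter U}.
Hypotheses (dD : derivation mul setT I D) (FU : F `<=` U).

Definition ext_derivation (a y : A) : K := lim ((fun i => D a (mul y (aa i))) @ U).

Local Notation E := ext_derivation.

Lemma Iset_mul_aa y i : I (mul y (aa i)).
Proof. exact: Iset_mull. Qed.

Lemma ext_derivation_bounded :
  exists2 C : K, 0 <= C & forall a y i, `|D a (mul y (aa i))| <= C * `|a| * `|y|.
Proof.
have [M M0 DM] := derivation_bounded dD.
have [inhL _ _ _] := dle; have [B B0 aaB] := bounded_net_ge0 inhL bnd.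
exists (M * B); first exact: mulr_ge0.
move=> a y i; apply: le_trans (DM _ _ (Iset_mul_aa y i)) _.
have -> : M * B * `|a| * `|y| = M * `|a| * (`|y| * B) by ring.
rewrite ler_wpM2l ?mulr_ge0 //.
exact: le_trans (bmul_norm_le _ _) (ler_wpM2l (normr_ge0 _) (aaB i)).
Qed.

Lemma ext_derivation_cvg a y : (fun i => D a (mul y (aa i))) @ U --> E a y.
Proof.
have [C _ DC] := ext_derivation_bounded.
by have [l /cvgP] := Kcvg L U UU _ _ (DC a y).
Qed.

Lemma ext_derivationP a y l : (fun i => D a (mul y (aa i))) @ U --> l -> E a y = l.
Proof. exact: cvgr_unique (ext_derivation_cvg a y). Qed.

Lemma ultra_cvg {h : L -> K} {l : K} : h @ F --> l -> h @ U --> l.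
Proof. by move=> hl P /hl; exact: FU. Qed.

Lemma ext_derivationE a {x} : I x -> E a x = D a x.
Proof.
move=> Ix; apply: ext_derivationP; apply: ultra_cvg.
exact: (in_dual_cvg IsetD IsetZ (derivation_dual dD a) (fun i => Iset_mulr (aa i) Ix) Ix
  ((IsetP x).1 Ix)).
Qed.

Lemma ext_derivation_dual a : in_dual setT (E a).
Proof.
have [DaD DaZ _] := derivation_dual dD a; split.
- move=> x y _ _; apply: ext_derivationP.
  under eq_fun => i do rewrite bmulDl (DaD _ _ (Iset_mul_aa x i) (Iset_mul_aa y i)).
  exact: cvgD (ext_derivation_cvg a x) (ext_derivation_cvg a y).
- move=> k x _; apply: ext_derivationP.
  under eq_fun => i do rewrite bmulZl (DaZ _ _ (Iset_mul_aa x i)).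
  exact: cvgMl_tmp (ext_derivation_cvg a x).
- have [C _ DC] := ext_derivation_bounded.
  by exists (C * `|a|) => y _; exact: cvg_norm_ubound (ext_derivation_cvg a y) (DC a y).
Qed.

Lemma commutator_derivation_cvg a b y :
  (fun i => D b (mul y (mul (aa i) a - mul a (aa i)))) @ F --> 0.
Proof.
have [M M0 DM] := derivation_bounded dD.
have comm0 : (fun i => mul (aa i) a - mul a (aa i)) @ F --> 0.
  rewrite -oppr0; under eq_fun => i do rewrite -opprB.
  exact: cvgN (quasi_central_cvg a).
apply: (cvg_dominated (C := M * `|b| * `|y|) _ _ comm0); first by rewrite !mulr_ge0.
move=> i; rewrite !subr0; apply: le_trans (DM _ _ _) _.
  by apply/Iset_mull/IsetB; [exact: Iset_mulr|exact: Iset_mull].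
by rewrite -[M * _ * _ * _]mulrA ler_wpM2l ?mulr_ge0 // bmul_norm_le.
Qed.

Lemma ext_derivation_leibniz a b y : E (mul a b) y = E b (mul y a) + E a (mul b y).
Proof.
apply: ext_derivationP.
have -> : (fun i => D (mul a b) (mul y (aa i))) = (fun i =>
    D b (mul (mul y a) (aa i)) + D b (mul y (mul (aa i) a - mul a (aa i)))
    + D a (mul (mul b y) (aa i))).
  apply/funext => i; rewrite (derivation_leibniz dD _ _ (Iset_mul_aa y i)) bmulBr !bmulA.
  rewrite (in_dual_raddfB IsetZ (derivation_dual dD b) (Iset_mulr a (Iset_mul_aa y i))
    (Iset_mul_aa _ i)).
  by rewrite subrKC.
rewrite -[E b (mul y a)]addr0.
apply: cvgD; [apply: cvgD|]; first exact: ext_derivation_cvg.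
- exact/ultra_cvg/commutator_derivation_cvg.
- exact: ext_derivation_cvg.
Qed.

Lemma ext_derivation_derivation : derivation mul setT setT E.
Proof.
split=> [a _|a b x _ _ _|k a x _ _||a b x _ _ _]; first exact: ext_derivation_dual.
- apply: ext_derivationP.
  under eq_fun => i do rewrite (derivationD dD _ _ (Iset_mul_aa x i)).
  exact: cvgD (ext_derivation_cvg a x) (ext_derivation_cvg b x).
- apply: ext_derivationP.
  under eq_fun => i do rewrite (derivationZ dD _ _ (Iset_mul_aa x i)).
  exact: cvgMl_tmp (ext_derivation_cvg a x).
- have [C _ DC] := ext_derivation_bounded.
  by exists C => a y _ _; exact: cvg_norm_ubound (ext_derivation_cvg a y) (DC a y).
- exact: ext_derivation_leibniz.
Qed.

Lemma inner_ext_derivation : inner_derivation mul setT setT E -> inner_derivation mul setT I D.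
Proof.
case=> g gd Eg; exists g; first exact: in_dualS gd.
by move=> a x _ Ix; rewrite -ext_derivationE // Eg.
Qed.

End Extension.

Lemma H1_trivial_weakly_amenable :
  bounded_ultra_cvg K -> bounded_net aa -> (forall i, I (aa i)) ->
  weakly_amenable mul -> H1_trivial mul setT I.
Proof.
move=> Kcvg bnd Iaa WA D dD.
have [U [UU FU]] := ultraFilterLemma (net_filter_proper dle).
apply: (inner_ext_derivation Kcvg bnd Iaa dD FU).
exact: WA _ (ext_derivation_derivation Kcvg bnd Iaa dD FU).
Qed.

Section CodimOne.
Context {M : set A} {e : A} {coef : A -> K} {rest : A -> A}.
Hypotheses (M_ideal : forall a m, M m -> M (mul a m) /\ M (mul m a))
  (M_rest : forall a, M (rest a)) (decomp : forall a, a = coef a *: e + rest a).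
Context {D : A -> A -> K} {f : A -> K}.
Hypotheses (dD : derivation mul setT I D) (fd : in_dual I f)
  (Df : forall m x, M m -> I x -> D m x = f (mul x m) - f (mul m x)).

Definition defect (x : A) : K := D e x - (f (mul x e) - f (mul e x)).

Lemma defect_dual : in_dual I defect.
Proof.
exact: in_dualB (derivation_dual dD e) (in_dualB (in_dual_mulr e fd) (in_dual_mull e fd)).
Qed.

Lemma in_dual_mulr_decomp {g : A -> K} a {x} :
  in_dual I g -> I x -> g (mul x a) = coef a * g (mul x e) + g (mul x (rest a)).
Proof.
case=> gD gZ _ Ix; have Ixe := Iset_mulr e Ix.
rewrite {1}(decomp a) bmulDr bmulZr gD ?gZ //; first exact: IsetZ.
exact: Iset_mulr.
Qed.

Lemma in_dual_mull_decomp {g : A -> K} a {x} :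
  in_dual I g -> I x -> g (mul a x) = coef a * g (mul e x) + g (mul (rest a) x).
Proof.
case=> gD gZ _ Ix; have Iex := Iset_mull e Ix.
rewrite {1}(decomp a) bmulDl bmulZl gD ?gZ //; first exact: IsetZ.
exact: Iset_mull.
Qed.

Lemma defect_mul_ideall {m x} : M m -> I x -> defect (mul m x) = 0.
Proof.
move=> Mm Ix; have [Mem _] := M_ideal e m Mm; rewrite /defect.
have -> : D e (mul m x) = D (mul e m) x - D m (mul x e).
  by rewrite (derivation_leibniz dD _ _ Ix) addrAC subrr add0r.
rewrite (Df _ _ Mem Ix) (Df _ _ Mm (Iset_mulr e Ix)) !bmulA.
by ring.
Qed.

Lemma defect_mul_idealr {m x} : M m -> I x -> defect (mul x m) = 0.
Proof.
move=> Mm Ix; have [_ Mme] := M_ideal e m Mm; rewrite /defect.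
have -> : D e (mul x m) = D (mul m e) x - D m (mul e x).
  by rewrite (derivation_leibniz dD _ _ Ix) addrK.
rewrite (Df _ _ Mme Ix) (Df _ _ Mm (Iset_mull e Ix)) !bmulA.
by ring.
Qed.

Lemma defect_mulr a {x} : I x -> defect (mul x a) = coef a * defect (mul x e).
Proof.
move=> Ix.
by rewrite (in_dual_mulr_decomp a defect_dual Ix) (defect_mul_idealr (M_rest a) Ix) addr0.
Qed.

Lemma defect_mull a {x} : I x -> defect (mul a x) = coef a * defect (mul e x).
Proof.
move=> Ix.
by rewrite (in_dual_mull_decomp a defect_dual Ix) (defect_mul_ideall (M_rest a) Ix) addr0.
Qed.

Lemma defect_mul_ee {x} : I x ->
  defect (mul x e) + defect (mul e x) = coef (mul e e) * defect x.
Proof.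
move=> Ix.
have De_ex : D e (mul e x) = D (mul e e) x - D e (mul x e).
  by rewrite (derivation_leibniz dD _ _ Ix) addrAC subrr add0r.
have Dee : D (mul e e) x =
    coef (mul e e) * D e x + (f (mul x (rest (mul e e))) - f (mul (rest (mul e e)) x)).
  by rewrite {1}(decomp (mul e e)) (derivationD dD _ _ Ix) (derivationZ dD _ _ Ix)
    (Df _ _ (M_rest _) Ix).
rewrite /defect De_ex Dee -bmulA (bmulA e x e) (bmulA e e x).
rewrite (in_dual_mulr_decomp (mul e e) fd Ix) (in_dual_mull_decomp (mul e e) fd Ix).
by ring.
Qed.

Lemma defect_cvgr {y} : I y -> (fun i => coef (aa i) * defect (mul y e)) @ F --> defect y.
Proof.
move=> Iy; under eq_fun => i do rewrite -(defect_mulr (aa i) Iy).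
exact: (in_dual_cvg IsetD IsetZ defect_dual (fun i => Iset_mulr (aa i) Iy) Iy
  ((IsetP y).1 Iy)).
Qed.

Lemma defect_cvgl {y} : I y -> (fun i => coef (aa i) * defect (mul e y)) @ F --> defect y.
Proof.
move=> Iy; under eq_fun => i do rewrite -(defect_mull (aa i) Iy).
exact: (in_dual_cvg IsetD IsetZ defect_dual (fun i => Iset_mull (aa i) Iy) Iy
  (Iset_cvg_left Iy)).
Qed.

Lemma defect_mule_eq0 {x} : I x -> defect (mul x e) = 0.
Proof.
move=> Ix; have [//|nz] := eqVneq (defect (mul x e)) 0.
pose k := defect x / defect (mul x e).
have coef_cvg : (fun i => coef (aa i)) @ F --> k.
  under eq_fun => i do rewrite -(mulfK nz (coef (aa i))).
  exact: cvgMr_tmp (defect_cvgr Ix).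
have defect_r y : I y -> defect y = k * defect (mul y e).
  by move=> Iy; exact: cvgr_unique (defect_cvgr Iy) (cvgMr_tmp coef_cvg).
have defect_l y : I y -> defect y = k * defect (mul e y).
  by move=> Iy; exact: cvgr_unique (defect_cvgl Iy) (cvgMr_tmp coef_cvg).
have kc : k * coef (mul e e) = 1.
  apply: (mulIf nz); rewrite mul1r -mulrA -defect_mulr // bmulA.
  by rewrite -defect_r //; exact: Iset_mulr.
have ex0 : defect (mul e x) = 0.
  have := defect_mul_ee Ix; rewrite (defect_r _ Ix) mulrA (mulrC _ k) kc mul1r.
  by rewrite -{2}(addr0 (defect (mul x e))) => /addrI.
by have := defect_mul_ee Ix; rewrite ex0 addr0 (defect_l _ Ix) ex0 !mulr0.
Qed.

Lemma defect_eq0 {y} : I y -> defect y = 0.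
Proof.
move=> Iy; apply: cvgr_unique (defect_cvgr Iy) _.
rewrite (defect_mule_eq0 Iy); under eq_fun => i do rewrite mulr0.
exact: cvg_cst.
Qed.

Lemma codim_one_inner : inner_derivation mul setT I D.
Proof.
exists f => // a x _ Ix.
have De_x : D e x = f (mul x e) - f (mul e x).
  by apply/eqP; rewrite -subr_eq0; apply/eqP; exact: defect_eq0.
rewrite {1}(decomp a) (derivationD dD _ _ Ix) (derivationZ dD _ _ Ix) (Df _ _ (M_rest a) Ix).
rewrite De_x (in_dual_mulr_decomp a fd Ix) (in_dual_mull_decomp a fd Ix).
by ring.
Qed.

End CodimOne.

Lemma H1_trivial_codim_one (M : set A) :
  closed_ideal mul M -> codim_one M -> H1_trivial mul M I -> H1_trivial mul setT I.
Proof.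
case=> _ _ _ _ M_ideal [e _ dec] H1M D dD.
have /choice[g Hg] : forall a, exists p : K * A, M p.2 /\ a = p.1 *: e + p.2.
  by move=> a; have [k [m Mm ->]] := dec a; exists (k, m).
have [f fd Df] := H1M D (derivation_sub (@subsetT _ M) dD).
exact: (codim_one_inner M_ideal (fun a => (Hg a).1) (fun a => (Hg a).2) dD fd Df).
Qed.

End QuasiCentralNet.
End BanachAlgebra.

Lemma compact_ultra_cvg {T : Type} {X : topologicalType} {S : set X}
    {U : set_system T} (UU : UltraFilter U) (h : T -> X) :
  compact S -> (forall t, S (h t)) -> exists l : X, h @ U --> l.
Proof.
move=> cS hS.
have US : (h @ U) S by apply: (@filterS _ U _ setT) filterT => t _; exact: hS.
have [l [_ cl]] := cS (h @ U) _ US.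
exists l => V nV; have [//|UnV] := in_ultra_setVsetC (h @^-1` V) UU.
by have [x [nVx Vx]] := cl (~` V) V UnV nV.
Qed.

Section ComplexUltraLimits.
Context {R : realType}.
Local Open Scope complex_scope.
Local Notation Re := (@complex.Re R).
Local Notation Im := (@complex.Im R).
(* The topology of [R[i]] is found through its [numFieldType] structure. *)
Local Notation Ri := (R[i] : numFieldType).

Lemma normc_le_ReIm (z : R[i]) : `|z| <= (`|Re z| + `|Im z|)%:C.
Proof.
rewrite normc_def lecR -[X in _ <= X]ger0_norm ?addr_ge0 // -sqrtr_sqr.
rewrite ler_sqrt ?sqr_ge0 // sqrrD !real_normK ?num_real //.
by rewrite addrAC lerDl mulrn_wge0 // mulr_ge0.
Qed.

Lemma normc_ge_Im (z : R[i]) : `|Im z|%:C <= `|z|.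
Proof.
rewrite normc_def lecR -sqrtr_sqr ler_sqrt ?addr_ge0 ?sqr_ge0 //.
by rewrite lerDr sqr_ge0.
Qed.

Lemma cvg_ReIm {T : Type} {F : set_system T} {FF : Filter F} {h : T -> Ri} {a b : R} :
  (fun t => Re (h t)) @ F --> a -> (fun t => Im (h t)) @ F --> b -> h @ F --> (a +i* b : Ri).
Proof.
move=> /cvgrPdist_lt ha /cvgrPdist_lt hb; apply/cvgrPdist_lt => e e_gt0.
have /andP[/eqP/= Im_e Re_e] : (Im e == Im 0) && (Re 0 < Re e) by rewrite -ltcE.
(* Positivity in [R[i]] forces [e] to be real. *)
have -> : e = (Re e)%:C by case: e {e_gt0 Re_e} Im_e => ? ? /= ->.
have e2_gt0 : 0 < Re e / 2 by rewrite divr_gt0.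
near=> t.
have ht1 : `|a - Re (h t)| < Re e / 2 by near: t; exact: ha.
have ht2 : `|b - Im (h t)| < Re e / 2 by near: t; exact: hb.
apply: le_lt_trans (normc_le_ReIm _) _.
move: ht1 ht2; case: (h t) => x y /= ht1 ht2.
by rewrite ltcR [Re e]splitr ltrD.
Unshelve. all: by end_near.
Qed.

Lemma bounded_ultra_cvg_complex : bounded_ultra_cvg R[i].
Proof.
move=> T U UU h B hB.
have hB' t : `|Re (h t)| <= Re B /\ `|Im (h t)| <= Re B.
  by split; [have := le_trans (normc_ge_Re (h t)) (hB t)|
             have := le_trans (normc_ge_Im (h t)) (hB t)]; rewrite lecE => /andP[].
have inB r : `|r| <= Re B -> `[- Re B, Re B]%classic r.
  by move=> rB; rewrite /= in_itv /= -ler_norml.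
have cB := @segment_compact R (- Re B) (Re B).
have [lr lrP] := compact_ultra_cvg UU (fun t => Re (h t)) cB (fun t => inB _ (hB' t).1).
have [li liP] := compact_ultra_cvg UU (fun t => Im (h t)) cB (fun t => inB _ (hB' t).2).
by exists (lr +i* li); exact: cvg_ReIm.
Qed.

End ComplexUltraLimits.

Theorem theorem3p7 (R : realType) (A : completeNormedModType R[i])
  (mul : A -> A -> A) (L : Type) (le : L -> L -> Prop) (aa : L -> A) :
  banach_algebra mul ->
  directed le ->
  bounded_net aa ->
  quasi_central mul le aa ->
  ((weakly_amenable mul /\ (forall i, Iset mul le aa (aa i)))
   \/ (exists M : set A, [/\ closed_ideal mul M, codim_one M
                           & H1_trivial mul M (Iset mul le aa)])) ->
  H1_trivial mul setT (Iset mul le aa).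
Proof.
move=> BA dle bnd qc [[WA Iaa]|[M [M_ideal M_codim H1M]]].
- exact: (H1_trivial_weakly_amenable BA dle qc bounded_ultra_cvg_complex bnd Iaa WA).
- exact: (H1_trivial_codim_one BA dle qc M M_ideal M_codim H1M).
Qed.
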